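(* Let $G$ be a connected graph and $U\subseteq V(G)$ such that every $U$-rooted minor of $G$ with countable branch sets has countable colouring number. Then every branch of a slim $U$-rooted normal semi-partition tree $(T,\mathcal V)$ of $G$ is at most countable; in particular, all bags $V_t$ are countable.
   Context: Minors are given by disjoint connected branch sets; a minor is $U$-rooted if every branch set meets $U$. Countable colouring number: a well-order of the vertices in which each vertex is preceded by only finitely many neighbours. An order tree is a poset with unique minimal element in which every down-closure $\lceil t\rceil$ is well-ordered; a branch is a maximal chain; $\mathring{\lceil t\rceil}=\lceil t\rceil\setminus\{t\}$; height of $t$ = order type of $\mathring{\lceil t\rceil}$. A $T$-graph is a graph on $T$ whose edges have comparable endvertices and in which the lower neighbours of each $t$ are cofinal in $\mathring{\lceil t\rceil}$. $(T,(V_t)_{t\in T})$ with nonempty $V_t\subseteq V(G)$ is a normal semi-partition tree if the $V_t$ are pairwise disjoint, each $G[V_t]$ connected, contracting each $V_t$ in $G[\bigcup V_t]$ gives a $T$-graph, and for every path in $G$ with at least one edge, endvertices in $V_t$, $V_{t'}$, inner vertices outside $\bigcup V_s$ and no edges inside $G[\bigcup V_s]$, $t,t'$ are comparable. Slim: $|V_t|\le|\mathrm{height}(t)|+\aleph_0$; $U$-rooted: each $V_t$ meets $U$. *)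

From Stdlib Require Import List.
Import ListNotations.
Set Implicit Arguments.

Definition countable_set (A : Type) (P : A -> Prop) : Prop :=
  exists f : A -> nat, forall x y, P x -> P y -> f x = f y -> x = y.

Definition finite_set (A : Type) (P : A -> Prop) : Prop :=
  exists l : list A, forall x, P x -> In x l.

Definition simple_graph (V : Type) (adj : V -> V -> Prop) : Prop :=
  (forall x y, adj x y -> adj y x) /\ (forall x, ~ adj x x).

Fixpoint consec (V : Type) (R : V -> V -> Prop) (p : list V) : Prop :=
  match p with
  | x :: ((y :: _) as q) => R x y /\ consec R q
  | _ => True
  end.

Definition is_path (V : Type) (adj : V -> V -> Prop) (p : list V) : Prop :=
  NoDup p /\ consec adj p.

Definition connected_set (V : Type) (adj : V -> V -> Prop) (X : V -> Prop) : Prop :=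
  (exists x, X x) /\
  forall x y, X x -> X y ->
    exists l : list V, is_path adj (x :: l) /\ last (x :: l) x = y /\
                       Forall X (x :: l).

Definition connected_graph (V : Type) (adj : V -> V -> Prop) : Prop :=
  connected_set adj (fun _ => True).

Definition rooted_countable_minor_model (V : Type) (adj : V -> V -> Prop)
  (U : V -> Prop) (I : Type) (adjH : I -> I -> Prop) (B : I -> V -> Prop) : Prop :=
  (forall x, connected_set adj (B x)) /\
  (forall x y v, x <> y -> B x v -> B y v -> False) /\
  (forall x, exists u, B x u /\ U u) /\
  (forall x, countable_set (B x)) /\
  (forall x y, adjH x y -> exists u v, B x u /\ B y v /\ adj u v).

Definition strict_well_order (I : Type) (R : I -> I -> Prop) : Prop :=
  (forall x, ~ R x x) /\
  (forall x y z, R x y -> R y z -> R x z) /\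
  (forall x y, x = y \/ R x y \/ R y x) /\
  well_founded R.

Definition countable_colouring_number (I : Type) (adjH : I -> I -> Prop) : Prop :=
  exists R : I -> I -> Prop, strict_well_order R /\
    forall x, finite_set (fun y => R y x /\ adjH x y).

Section OrderTree.
Variables (T : Type) (le : T -> T -> Prop).

Definition lt_of (s t : T) : Prop := le s t /\ s <> t.

Definition comparable (s t : T) : Prop := le s t \/ le t s.

Definition well_ordered_on (P : T -> Prop) : Prop :=
  (forall x y, P x -> P y -> comparable x y) /\
  (forall Q : T -> Prop, (exists x, P x /\ Q x) ->
     exists m, P m /\ Q m /\ forall y, P y -> Q y -> le m y).

Definition order_tree : Prop :=
  (forall x, le x x) /\
  (forall x y, le x y -> le y x -> x = y) /\
  (forall x y z, le x y -> le y z -> le x z) /\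
  (exists! r, forall s, le s r -> s = r) /\
  (forall t, well_ordered_on (fun s => le s t)).

Definition chain (C : T -> Prop) : Prop :=
  forall x y, C x -> C y -> comparable x y.

Definition branch (C : T -> Prop) : Prop :=
  chain C /\ forall C', chain C' -> (forall x, C x -> C' x) ->
                        forall x, C' x -> C x.

Definition T_graph (adjT : T -> T -> Prop) : Prop :=
  (forall s t, adjT s t -> comparable s t) /\
  (forall t s, lt_of s t -> exists u, adjT u t /\ lt_of u t /\ le s u).

End OrderTree.

Section NST.
Variables (V : Type) (adj : V -> V -> Prop) (T : Type) (le : T -> T -> Prop)
          (Vb : T -> V -> Prop).

Definition in_union (v : V) : Prop := exists s, Vb s v.

(* the graph on T obtained from G[\bigcup V_t] by contracting each V_t *)
Definition contracted_adj (s t : T) : Prop :=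
  s <> t /\ exists u v, Vb s u /\ Vb t v /\ adj u v.

Definition normal_semi_partition_tree : Prop :=
  order_tree le /\
  (forall t, exists v, Vb t v) /\
  (forall s t v, s <> t -> Vb s v -> Vb t v -> False) /\
  (forall t, connected_set adj (Vb t)) /\
  T_graph le contracted_adj /\
  (* the path x :: l ++ [y] has >= 1 edge, ends in V_t and V_t', inner
     vertices outside \bigcup V_s, and no edge inside G[\bigcup V_s] *)
  (forall (t t' : T) (x y : V) (l : list V),
     is_path adj (x :: l ++ [y]) ->
     Vb t x -> Vb t' y ->
     Forall (fun v => ~ in_union v) l ->
     consec (fun a b => ~ (in_union a /\ in_union b)) (x :: l ++ [y]) ->
     comparable le t t').

(* slim: |V_t| <= |height(t)| + aleph_0, where |height(t)| is the
   cardinality of the strict down-closure of t; expressed as an injection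
   of V_t into (strict down-closure of t) + nat *)
Definition slim : Prop :=
  forall t, exists f : V -> T + nat,
    (forall x y, Vb t x -> Vb t y -> f x = f y -> x = y) /\
    (forall x s, Vb t x -> f x = inl s -> lt_of le s t).

Definition U_rooted (U : V -> Prop) : Prop :=
  forall t, exists u, Vb t u /\ U u.

End NST.


(* Suppose some initial segment of the tree were uncountable. The least t with uncountable
   initial segment gives an uncountable down-closed chain below t all of whose initial segments
   are countable; an uncountable branch is such a chain as well. Contracting the bags of such a
   chain D yields a U-rooted minor whose branch sets are countable by slimness and whose
   contracted graph is a T-graph on the uncountable well-order D with countable initial segments.
   Such a graph has no well-order R in which each vertex has finitely many R-earlier neighbours:
   climb an omega-sequence x_n in D such that x_(n+1) lies above all R-earlier neighbours of the
   points below x_n, and let lim be the least point above the whole sequence. A lower neighbour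
   of lim coming R-after it would place lim below some x_(n+1); so all lower neighbours of lim are
   R-earlier, hence finitely many, hence below some x_N, contradicting that the lower neighbours
   of lim are cofinal below lim. *)

From Stdlib Require Import List Lia Classical ClassicalEpsilon ProofIrrelevance.
From Stdlib Require Cantor.
Import ListNotations.
Set Implicit Arguments.
Unset Strict Implicit.

Definition enumerable (A : Type) (P : A -> Prop) : Prop :=
  exists e : nat -> option A, forall x, P x -> exists n, e n = Some x.

Lemma proj1_sig_injective (A : Type) (P : A -> Prop) (a b : {x | P x}) :
  proj1_sig a = proj1_sig b -> a = b.
Proof. apply eq_sig_hprop. intros x; apply proof_irrelevance. Qed.

Section Enumerable.
Context {A : Type}.

Lemma countable_set_enumerable (P : A -> Prop) : countable_set P <-> enumerable P.
Proof.
  split.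
  - intros [f f_inj].
    exists (fun n => match excluded_middle_informative (exists x, P x /\ f x = n) with
                | left h => Some (proj1_sig (constructive_indefinite_description _ h))
                | right _ => None end).
    intros x Px. exists (f x).
    destruct (excluded_middle_informative _) as [h|h].
    + destruct (constructive_indefinite_description _ h) as [y [Py fy]]; simpl.
      f_equal. apply f_inj; assumption.
    + exfalso; apply h; eauto.
  - intros [e e_onto].
    exists (fun x => match excluded_middle_informative (exists n, e n = Some x) with
                | left h => proj1_sig (constructive_indefinite_description _ h)
                | right _ => 0 end).
    intros x y Px Py.
    destruct (excluded_middle_informative (exists n, e n = Some x)) as [hx|hx];
      [| exfalso; apply hx; auto].
    destruct (excluded_middle_informative (exists n, e n = Some y)) as [hy|hy];
      [| exfalso; apply hy; auto].
    destruct (constructive_indefinite_description _ hx) as [n en].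
    destruct (constructive_indefinite_description _ hy) as [m em]; simpl.
    intros ->. congruence.
Qed.

Lemma enumerable_subset (P Q : A -> Prop) :
  enumerable Q -> (forall x, P x -> Q x) -> enumerable P.
Proof. intros [e e_onto] PQ. exists e. auto. Qed.

Lemma finite_set_enumerable (P : A -> Prop) : finite_set P -> enumerable P.
Proof.
  intros [l l_spec]. exists (nth_error l).
  intros x Px. apply In_nth_error, l_spec, Px.
Qed.

Lemma enumerable_nat_union (P : nat -> A -> Prop) :
  (forall n, enumerable (P n)) -> enumerable (fun x => exists n, P n x).
Proof.
  intros P_enum. destruct (choice _ P_enum) as [e e_onto].
  exists (fun m => let (i, j) := Cantor.of_nat m in e i j).
  intros x [n Pnx]. destruct (e_onto n x Pnx) as [j ej].
  exists (Cantor.to_nat (n, j)). rewrite Cantor.cancel_of_to. exact ej.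
Qed.

Lemma enumerable_indexed_union (B : Type) (Q : B -> Prop) (P : B -> A -> Prop) :
  enumerable Q -> (forall b, Q b -> enumerable (P b)) ->
  enumerable (fun x => exists b, Q b /\ P b x).
Proof.
  intros [e e_onto] P_enum.
  apply enumerable_subset
    with (Q := fun x => exists n b, e n = Some b /\ Q b /\ P b x).
  - apply enumerable_nat_union. intros n.
    destruct (classic (exists b, e n = Some b /\ Q b)) as [[b [en Qb]]|no_index].
    + apply enumerable_subset with (1 := P_enum b Qb).
      intros x [b' [en' [_ Pb'x]]]. rewrite en in en'. injection en' as <-. exact Pb'x.
    + exists (fun _ => None). intros x [b [en [Qb _]]]. exfalso; eauto.
  - intros x [b [Qb Pbx]]. destruct (e_onto b Qb) as [n en]. eauto.
Qed.

Lemma enumerable_or (P Q : A -> Prop) :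
  enumerable P -> enumerable Q -> enumerable (fun x => P x \/ Q x).
Proof.
  intros P_enum Q_enum.
  apply enumerable_subset
    with (Q := fun x => exists n : nat, (match n with 0 => P | _ => Q end) x).
  - apply enumerable_nat_union. intros [|n]; assumption.
  - intros x [Px|Qx]; [exists 0 | exists 1]; assumption.
Qed.

Lemma enumerable_sig (D P : A -> Prop) :
  enumerable P -> enumerable (fun a : {x | D x} => P (proj1_sig a)).
Proof.
  intros [e e_onto].
  exists (fun n => match e n with
                | Some x => match excluded_middle_informative (D x) with
                            | left Dx => Some (exist _ x Dx)
                            | right _ => None
                            end
                | None => None
                end).
  intros [x Dx] Px. destruct (e_onto x Px) as [n en]. exists n. rewrite en.
  destruct (excluded_middle_informative (D x)) as [Dx'|not_Dx]; [|contradiction].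
  f_equal. apply proj1_sig_injective. reflexivity.
Qed.

Lemma enumerable_of_sig (D : A -> Prop) :
  enumerable (fun _ : {x | D x} => True) -> enumerable D.
Proof.
  intros [e e_onto]. exists (fun n => option_map (@proj1_sig _ _) (e n)).
  intros x Dx. destruct (e_onto (exist _ x Dx) I) as [n en].
  exists n. rewrite en. reflexivity.
Qed.

End Enumerable.

Lemma slim_bag_countable (V T : Type) (le : T -> T -> Prop) (Vb : T -> V -> Prop) :
  slim le Vb -> forall t, enumerable (fun s => le s t) -> countable_set (Vb t).
Proof.
  intros bags_slim t below_t_enum.
  destruct (bags_slim t) as [f [f_inj f_below]].
  destruct (proj2 (countable_set_enumerable _) below_t_enum) as [g g_inj].
  exists (fun x => match f x with inl s => 2 * g s | inr n => S (2 * n) end).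
  intros x y Vx Vy.
  destruct (f x) as [s|n] eqn:fx; destruct (f y) as [s'|n'] eqn:fy; intros E.
  - assert (s = s') as <-.
    { apply g_inj; [apply (f_below x) | apply (f_below y) | lia]; assumption. }
    apply f_inj; congruence.
  - lia.
  - lia.
  - assert (n = n') as <- by lia. apply f_inj; congruence.
Qed.

Section UncountableWellOrder.
Variables (W : Type) (le : W -> W -> Prop) (adj : W -> W -> Prop).
Hypothesis le_reflexive : forall x, le x x.
Hypothesis le_antisymmetric : forall x y, le x y -> le y x -> x = y.
Hypothesis le_transitive : forall x y z, le x y -> le y z -> le x z.
Hypothesis le_well_ordered : well_ordered_on le (fun _ => True).
Hypothesis initial_segments_enumerable : forall a, enumerable (fun b => le b a).
Hypothesis W_not_enumerable : ~ enumerable (fun _ : W => True).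
Hypothesis adj_symmetric : forall a b, adj a b -> adj b a.
Hypothesis adj_T_graph : T_graph le adj.

Lemma le_total x y : le x y \/ le y x.
Proof. exact (proj1 le_well_ordered x y I I). Qed.

Lemma exists_least (Q : W -> Prop) :
  (exists x, Q x) -> exists m, Q m /\ forall y, Q y -> le m y.
Proof.
  intros [x Qx].
  destruct (proj2 le_well_ordered Q) as [m [_ [Qm m_least]]]; eauto.
Qed.

Lemma exists_outside_enumerable (P : W -> Prop) : enumerable P -> exists z, ~ P z.
Proof.
  intros P_enum. apply NNPP. intros all_P. apply W_not_enumerable.
  apply enumerable_subset with (1 := P_enum). intros z _.
  apply NNPP. eauto.
Qed.

Lemma enumerable_strict_upper_bound (P : W -> Prop) :
  enumerable P -> exists z, forall x, P x -> lt_of le x z.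
Proof.
  intros P_enum.
  assert (down_enum : enumerable (fun y => exists x, P x /\ le y x))
    by (apply enumerable_indexed_union; auto).
  destruct (exists_outside_enumerable down_enum) as [z z_out].
  exists z. intros x Px.
  destruct (le_total z x) as [zx|xz]; [exfalso; eauto|].
  split; [exact xz|]. intros ->. apply z_out. eauto.
Qed.

Section Colouring.
Variable R : W -> W -> Prop.
Hypothesis R_total : forall a b, a = b \/ R a b \/ R b a.
Hypothesis R_finite : forall a, finite_set (fun y => R y a /\ adj a y).

Lemma exists_step a :
  exists z, lt_of le a z /\ forall b y, le b a -> R y b -> adj b y -> le y z.
Proof.
  destruct (@enumerable_strict_upper_bound
              (fun y => le y a \/ exists b, le b a /\ (R y b /\ adj b y))) as [z z_above].
  - apply enumerable_or; [apply initial_segments_enumerable|].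
    apply enumerable_indexed_union; [apply initial_segments_enumerable|].
    intros b _. apply finite_set_enumerable, R_finite.
  - exists z. split; [apply z_above; auto|].
    intros b y ba Ryb adj_by. apply (z_above y). right; eauto.
Qed.

Variable step : W -> W.
Hypothesis step_spec : forall a,
  lt_of le a (step a) /\ forall b y, le b a -> R y b -> adj b y -> le y (step a).
Variable x0 : W.

Definition climb (n : nat) : W := Nat.iter n step x0.

Lemma climb_succ n : lt_of le (climb n) (climb (S n)).
Proof. exact (proj1 (step_spec (climb n))). Qed.

Lemma climb_monotone n m : n <= m -> le (climb n) (climb m).
Proof.
  induction 1; [apply le_reflexive|].
  apply le_transitive with (climb m); [assumption | apply climb_succ].
Qed.

Definition below_climb (y : W) : Prop := exists n, le y (climb n).

Lemma below_climb_enumerable : enumerable below_climb.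
Proof. apply enumerable_nat_union. intros n; apply initial_segments_enumerable. Qed.

Lemma below_climb_list_bounded (l : list W) :
  exists N, forall y, In y l -> below_climb y -> le y (climb N).
Proof.
  induction l as [|a l [N N_bound]].
  - exists 0. intros y [].
  - destruct (classic (below_climb a)) as [[k ak]|a_out].
    + exists (Nat.max N k). intros y [<-|y_in] y_below.
      * apply le_transitive with (climb k); [exact ak | apply climb_monotone; lia].
      * apply le_transitive with (climb N); [apply N_bound; assumption | apply climb_monotone; lia].
    + exists N. intros y [<-|y_in] y_below; [contradiction | auto].
Qed.

Variable lim : W.
Hypothesis lim_not_below : ~ below_climb lim.
Hypothesis lim_least : forall y, ~ below_climb y -> le lim y.

Lemma climb_lt_lim n : lt_of le (climb n) lim.
Proof.
  destruct (le_total lim (climb n)) as [lim_le|le_lim].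
  - exfalso. apply lim_not_below. exists n. exact lim_le.
  - split; [exact le_lim|]. intros E. apply lim_not_below. exists n.
    rewrite E. apply le_reflexive.
Qed.

Lemma below_lim_below_climb y : lt_of le y lim -> below_climb y.
Proof.
  intros [y_le y_ne]. apply NNPP. intros y_out.
  apply y_ne, le_antisymmetric; [exact y_le | apply lim_least, y_out].
Qed.

(* A lower neighbour u <= climb n coming R-after lim would force lim <= climb (S n). *)
Lemma lower_neighbour_of_lim_earlier u : adj u lim -> lt_of le u lim -> R u lim.
Proof.
  intros adj_u u_lt. destruct (below_lim_below_climb u_lt) as [n u_le].
  destruct (R_total u lim) as [E|[Rul|Rlu]].
  - exfalso. exact (proj2 u_lt E).
  - exact Rul.
  - exfalso. apply lim_not_below. exists (S n).
    apply (proj2 (step_spec (climb n)) u); assumption.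
Qed.

Lemma lim_lower_neighbours_bounded :
  exists N, forall u, adj u lim -> lt_of le u lim -> le u (climb N).
Proof.
  destruct (R_finite lim) as [l l_spec].
  destruct (below_climb_list_bounded l) as [N N_bound].
  exists N. intros u adj_u u_lt. apply N_bound.
  - apply l_spec. split; [apply lower_neighbour_of_lim_earlier | apply adj_symmetric]; assumption.
  - apply below_lim_below_climb, u_lt.
Qed.

End Colouring.

Theorem not_countable_colouring_number : ~ countable_colouring_number adj.
Proof.
  intros [R [[_ [_ [R_total _]]] R_finite]].
  (* W is inhabited, being non-enumerable. *)
  destruct (@exists_outside_enumerable (fun _ => False)) as [x0 _].
  { exists (fun _ => None). intros _ []. }
  destruct (choice _ (exists_step R_finite)) as [step step_spec].
  destruct (@exists_least (fun y => ~ below_climb step x0 y)) as [lim [lim_out lim_least]].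
  { apply exists_outside_enumerable, below_climb_enumerable. }
  destruct (lim_lower_neighbours_bounded R_total R_finite step_spec lim_out lim_least)
    as [N bounded].
  destruct (proj2 adj_T_graph lim (climb step x0 (S N))) as [u [adj_u [u_lt climb_le_u]]].
  { apply climb_lt_lim; assumption. }
  destruct (climb_succ step_spec x0 N) as [climb_le climb_ne].
  apply climb_ne, le_antisymmetric; [exact climb_le|].
  apply le_transitive with u; [exact climb_le_u | apply bounded; assumption].
Qed.

End UncountableWellOrder.

Section OrderTree.
Variables (T : Type) (le : T -> T -> Prop).
Hypothesis tree : order_tree le.

Lemma tree_reflexive x : le x x.
Proof. exact (proj1 tree x). Qed.

Lemma tree_antisymmetric x y : le x y -> le y x -> x = y.
Proof. exact (proj1 (proj2 tree) x y). Qed.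

Lemma tree_transitive x y z : le x y -> le y z -> le x z.
Proof. exact (proj1 (proj2 (proj2 tree)) x y z). Qed.

Lemma tree_down_closure_well_ordered t : well_ordered_on le (fun s => le s t).
Proof. exact (proj2 (proj2 (proj2 (proj2 tree))) t). Qed.

Lemma chain_well_ordered (D : T -> Prop) : chain le D -> well_ordered_on le D.
Proof.
  intros D_chain. split; [exact D_chain|].
  intros Q [x [Dx Qx]].
  destruct (proj2 (tree_down_closure_well_ordered x) (fun s => D s /\ Q s))
    as [m [_ [[Dm Qm] m_least]]].
  { exists x. split; [apply tree_reflexive | auto]. }
  exists m. split; [exact Dm|]. split; [exact Qm|].
  intros y Dy Qy. destruct (D_chain y x Dy Dx) as [yx|xy].
  - apply m_least; auto.
  - apply tree_transitive with x; [apply m_least; [apply tree_reflexive | auto] | exact xy].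
Qed.

Lemma strict_down_closure_chain t : chain le (fun s => lt_of le s t).
Proof. intros x y [xt _] [yt _]. exact (proj1 (tree_down_closure_well_ordered t) x y xt yt). Qed.

Lemma branch_down_closed C : branch le C -> forall a b, le a b -> C b -> C a.
Proof.
  intros [C_chain C_maximal] a b ab Cb.
  assert (below_b_comparable : forall x y, le x b -> le y b -> comparable le x y)
    by exact (proj1 (tree_down_closure_well_ordered b)).
  apply (C_maximal (fun x => C x \/ le x b)); auto.
  intros x y [Cx|xb] [Cy|yb]; auto.
  - destruct (C_chain x b Cx Cb) as [xb|b_le_x]; auto.
    right. apply tree_transitive with b; assumption.
  - destruct (C_chain y b Cy Cb) as [yb|b_le_y]; auto.
    left. apply tree_transitive with b; assumption.
Qed.

Section RootedMinor.
Variables (V : Type) (adj : V -> V -> Prop) (U : V -> Prop) (Vb : T -> V -> Prop).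
Hypothesis adj_symmetric : forall x y, adj x y -> adj y x.
Hypothesis rooted_minors_colourable :
  forall (I : Type) (adjH : I -> I -> Prop) (B : I -> V -> Prop),
    simple_graph adjH ->
    rooted_countable_minor_model adj U adjH B ->
    countable_colouring_number adjH.
Hypothesis bags_disjoint : forall s t v, s <> t -> Vb s v -> Vb t v -> False.
Hypothesis bags_connected : forall t, connected_set adj (Vb t).
Hypothesis contraction_T_graph : T_graph le (contracted_adj adj Vb).
Hypothesis bags_slim : slim le Vb.
Hypothesis bags_rooted : U_rooted Vb U.

Section DownClosedChain.
Variable D : T -> Prop.
Hypothesis D_chain : chain le D.
Hypothesis D_down_closed : forall a b, le a b -> D b -> D a.
Hypothesis D_initial_segments : forall t, D t -> enumerable (fun s => le s t).

Let leD (a b : {t | D t}) : Prop := le (proj1_sig a) (proj1_sig b).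
Let adjD (a b : {t | D t}) : Prop := contracted_adj adj Vb (proj1_sig a) (proj1_sig b).

Lemma restricted_simple_graph : simple_graph adjD.
Proof.
  split.
  - intros a b [a_ne_b [u [v [Vu [Vv uv]]]]].
    split; [congruence|]. exists v, u. auto.
  - intros a [a_ne _]. apply a_ne. reflexivity.
Qed.

Lemma restricted_minor_model :
  rooted_countable_minor_model adj U adjD (fun a => Vb (proj1_sig a)).
Proof.
  split; [|split; [|split; [|split]]].
  - intros a. apply bags_connected.
  - intros a b v a_ne_b va vb.
    apply (bags_disjoint (s := proj1_sig a) (t := proj1_sig b) (v := v)); [|exact va | exact vb].
    intros E. apply a_ne_b, proj1_sig_injective, E.
  - intros a. apply bags_rooted.
  - intros a. apply (slim_bag_countable bags_slim), D_initial_segments, proj2_sig.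
  - intros a b [_ edge]. exact edge.
Qed.

Lemma restricted_well_ordered : well_ordered_on leD (fun _ => True).
Proof.
  split.
  - intros a b _ _. apply D_chain; apply proj2_sig.
  - intros Q [x [_ Qx]].
    destruct (proj2 (chain_well_ordered D_chain) (fun s => exists a, proj1_sig a = s /\ Q a))
      as [m [_ [[a [<- Qa]] a_least]]].
    { exists (proj1_sig x). split; [apply proj2_sig | eauto]. }
    exists a. split; [exact I|]. split; [exact Qa|].
    intros y _ Qy. apply a_least; [apply proj2_sig | eauto].
Qed.

Lemma restricted_T_graph : T_graph leD adjD.
Proof.
  split.
  - intros a b _. apply D_chain; apply proj2_sig.
  - intros a b [ba b_ne_a].
    destruct (proj2 contraction_T_graph (proj1_sig a) (proj1_sig b))
      as [u [adj_ua [[ua u_ne_a] bu]]].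
    { split; [exact ba|]. intros E. apply b_ne_a, proj1_sig_injective, E. }
    assert (Du : D u) by (apply D_down_closed with (proj1_sig a); [exact ua | apply proj2_sig]).
    exists (exist _ u Du). split; [exact adj_ua|]. split; [split; [exact ua|] | exact bu].
    intros E. apply u_ne_a. rewrite <- E. reflexivity.
Qed.

Lemma down_closed_chain_enumerable : enumerable D.
Proof.
  apply NNPP. intros D_not_enumerable.
  apply (@not_countable_colouring_number {t | D t} leD adjD).
  - intros a. apply tree_reflexive.
  - intros a b ab ba. apply proj1_sig_injective, tree_antisymmetric; assumption.
  - intros a b c. apply tree_transitive.
  - exact restricted_well_ordered.
  - intros a. apply enumerable_sig with (P := fun s => le s (proj1_sig a)).
    apply D_initial_segments, proj2_sig.
  - intros sig_enumerable. apply D_not_enumerable, enumerable_of_sig, sig_enumerable.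
  - exact (proj1 restricted_simple_graph).
  - exact restricted_T_graph.
  - apply rooted_minors_colourable with (B := fun a => Vb (proj1_sig a)).
    + exact restricted_simple_graph.
    + exact restricted_minor_model.
Qed.

End DownClosedChain.

Lemma initial_segments_enumerable t : enumerable (fun s => le s t).
Proof.
  apply NNPP. intros t_not_enum.
  destruct (proj2 (tree_down_closure_well_ordered t) (fun s => ~ enumerable (fun s' => le s' s)))
    as [m [mt [m_not_enum m_least]]].
  { exists t. split; [apply tree_reflexive | exact t_not_enum]. }
  apply m_not_enum, enumerable_subset with (Q := fun s => lt_of le s m \/ s = m).
  - apply enumerable_or.
    + apply down_closed_chain_enumerable.
      * apply strict_down_closure_chain.
      * intros a b ab [bm b_ne_m]. split; [apply tree_transitive with b; assumption|].
        intros ->. apply b_ne_m, tree_antisymmetric; assumption.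
      * intros s [sm s_ne_m]. apply NNPP. intros s_not_enum.
        apply s_ne_m, tree_antisymmetric; [exact sm|].
        apply m_least; [apply tree_transitive with m; assumption | exact s_not_enum].
    + apply finite_set_enumerable. exists [m]. intros s ->. left. reflexivity.
  - intros s sm. destruct (classic (s = m)); [right | left; split]; assumption.
Qed.

Lemma branch_countable C : branch le C -> countable_set C.
Proof.
  intros C_branch. apply countable_set_enumerable, down_closed_chain_enumerable.
  - apply C_branch.
  - apply branch_down_closed, C_branch.
  - intros t _. apply initial_segments_enumerable.
Qed.

Lemma bag_countable t : countable_set (Vb t).
Proof. apply (slim_bag_countable bags_slim), initial_segments_enumerable. Qed.

End RootedMinor.
End OrderTree.

Theorem lemma5p2 (V : Type) (adj : V -> V -> Prop) (U : V -> Prop) :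
  simple_graph adj ->
  connected_graph adj ->
  (forall (I : Type) (adjH : I -> I -> Prop) (B : I -> V -> Prop),
      simple_graph adjH ->
      rooted_countable_minor_model adj U adjH B ->
      countable_colouring_number adjH) ->
  forall (T : Type) (le : T -> T -> Prop) (Vb : T -> V -> Prop),
    normal_semi_partition_tree adj le Vb ->
    slim le Vb ->
    U_rooted Vb U ->
    (forall C : T -> Prop, branch le C -> countable_set C) /\
    (forall t : T, countable_set (Vb t)).
Proof.
  intros [adj_symmetric _] _ rooted_minors_colourable T le Vb
         [tree [_ [bags_disjoint [bags_connected [contraction_T_graph _]]]]] bags_slim bags_rooted.
  split.
  - intros C. apply (branch_countable tree adj_symmetric rooted_minors_colourable bags_disjoint
                       bags_connected contraction_T_graph bags_slim bags_rooted).
  - apply (bag_countable tree adj_symmetric rooted_minors_colourable bags_disjoint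
             bags_connected contraction_T_graph bags_slim bags_rooted).
Qed.
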